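(* Let $r\ge1$ and let $\Psi(x,\hbar):=\sum_{j\ge0}s_{(j)}(\tilde{\mathbf t}/\hbar)\,x^j\prod_{l=1}^j\frac{1}{1-\hbar(l-1)}$ with $\tilde t_k=\delta_{k,r}/r$ (the wave function of monotone $r$-orbifold Hurwitz numbers). Then $$\hat x\Big(\hat x^{r-1}+\prod_{j=1}^r\big(1+\hat x\hat y+\hbar(j-1)\big)\hat y\Big)\Psi(x,\hbar)=0,\qquad\hat x=x\cdot,\ \hat y=-\hbar\frac{\partial}{\partial x}.$$ In particular for $r=1$: $\hat x(\hat x\hat y^2+\hat y+1)\Psi=0$.
   Context: $s_{(j)}$ is defined by $\exp(\sum_{m\ge1}t_mx^m)=\sum_{j\ge0}s_{(j)}(\mathbf t)x^j$, and $\tilde{\mathbf t}/\hbar=(\tilde t_1/\hbar,\tilde t_2/\hbar,\dots)$; with $\tilde t_k=\delta_{k,r}/r$ this gives $s_{(j)}=0$ unless $r\mid j$ and $s_{(rn)}=1/(n!\,r^n\hbar^n)$. $\Psi$ is a formal power series in $x$ with coefficients formal in $\hbar$. *)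

From HB Require Import structures.
From mathcomp Require Import all_boot all_order all_algebra.
Set Implicit Arguments. Unset Strict Implicit. Unset Printing Implicit Defensive.
Import Order.TTheory GRing.Theory Num.Theory.
Local Open Scope ring_scope.

Definition K : fieldType := {fraction {poly rat}}.
Definition hbar : K := (FracField.tofrac 'X).

(* Formal power series in x with coefficients in K: k-th coefficient. *)
Definition fps := nat -> K.

Definition xop (f : fps) : fps := fun k => if k is k'.+1 then f k' else 0.
Definition yop (f : fps) : fps := fun k => - (hbar * (k.+1)%:R * f k.+1).
Definition addop (f g : fps) : fps := fun k => f k + g k.

Definition factop (j : nat) (f : fps) : fps :=
  fun k => f k + xop (yop f) k + hbar * (j.-1)%:R * f k.

(* prod_{j=1}^m (1 + xhat yhat + hbar (j-1)) applied to f (factors commute) *)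
Fixpoint prodop (m : nat) (f : fps) : fps :=
  if m is m'.+1 then factop m'.+1 (prodop m' f) else f.

(* s_{(j)}(tilde t / hbar) with tilde t_k = delta_{k,r}/r *)
Definition s_tilde (r j : nat) : K :=
  if (r %| j)%N then ((j %/ r)`!%:R * r%:R ^+ (j %/ r) * hbar ^+ (j %/ r))^-1
  else 0.

Definition Psi (r : nat) : fps :=
  fun j => s_tilde r j * \prod_(1 <= l < j.+1) (1 - hbar * (l.-1)%:R)^-1.

(* Both operators in the equation act diagonally or by shifts on the monomials
   x^k: the product of the factors (1 + xy + hbar (j-1)) multiplies x^k by
   prod_(j<r) (1 + hbar j - hbar k), and y lowers degrees.  Writing
   Psi_j = s_j / prod_(i<j) (1 - hbar i), the coefficient of x^(m+r) in the
   equation is Psi_m - prod_(i<r) (1 - hbar (m+i)) * hbar (m+r) Psi_(m+r), which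
   vanishes by the recursion hbar (m+r) s_(m+r) = s_m of the Schur coefficients;
   in degrees below r both terms vanish because s_j = 0 for 0 < j < r. *)
From HB Require Import structures.
From mathcomp Require Import all_boot all_order all_algebra.
From mathcomp Require Import ring zify.
Import GRing.Theory Num.Theory.
Local Open Scope ring_scope.

Lemma natrK_neq0 n : (0 < n)%N -> (n%:R : K) != 0.
Proof.
move=> n_gt0; rewrite -(rmorph_nat (@FracField.tofrac _)) tofrac_eq0.
by rewrite -polyC_natr polyC_eq0 pnatr_eq0 -lt0n.
Qed.

Lemma hbar_neq0 : hbar != 0.
Proof. by rewrite /hbar tofrac_eq0 polyX_eq0. Qed.

Lemma subr_hbar_natr_neq0 i : 1 - hbar * i%:R != 0.
Proof.
have -> : 1 - hbar * i%:R = FracField.tofrac (1 - 'X * i%:R : {poly rat}).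
  by rewrite /hbar tofracB tofracM tofrac1 rmorph_nat.
rewrite tofrac_eq0; apply/eqP => /(congr1 (fun p : {poly rat} => p`_0)).
by rewrite coefB coef1 coefXM /= subr0 coef0 => /eqP; rewrite oner_eq0.
Qed.

Lemma iter_xopE n (f : fps) k :
  iter n xop f k = if (n <= k)%N then f (k - n)%N else 0.
Proof.
elim: n k => [|n IHn] k /=; first by rewrite subn0.
by case: k => [|k] //=; rewrite IHn ltnS subSS.
Qed.

Lemma xop_yopE (f : fps) k : xop (yop f) k = - (hbar * k%:R * f k).
Proof. by case: k => [|k] //=; rewrite mulr0 mul0r oppr0. Qed.

Lemma prodopE m (f : fps) k :
  prodop m f k = (\prod_(j < m) (1 + hbar * j%:R - hbar * k%:R)) * f k.
Proof.
elim: m => [|m IHm] /=; first by rewrite big_ord0 mul1r.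
by rewrite /factop xop_yopE IHm big_ord_recr /=; ring.
Qed.

Lemma prod_subr_hbar_natr_neq0 (e : nat -> nat) n :
  \prod_(i < n) (1 - hbar * (e i)%:R) != 0.
Proof.
by rewrite prodf_seq_neq0; apply/allP => i _; apply: subr_hbar_natr_neq0.
Qed.

Definition hpoch n : K := \prod_(i < n) (1 - hbar * i%:R).

Lemma hpochD m n :
  hpoch (m + n)%N = hpoch m * \prod_(i < n) (1 - hbar * (m + i)%N%:R).
Proof. by rewrite /hpoch big_split_ord. Qed.

Lemma PsiE r j : Psi r j = s_tilde r j / hpoch j.
Proof. by rewrite /Psi /hpoch prodfV big_add1 big_mkord. Qed.

Lemma s_tilde_small r j : (0 < j < r)%N -> s_tilde r j = 0.
Proof. by case/andP=> j_gt0 j_lt_r; rewrite /s_tilde gtnNdvd. Qed.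

Lemma mulr_natS_inv_fact_exp (F : fieldType) (a : F) n :
  a != 0 -> (n.+1)`!%:R != 0 :> F ->
  n.+1%:R * a / ((n.+1)`!%:R * a ^+ n.+1) = (n`!%:R * a ^+ n)^-1.
Proof.
move=> a0; rewrite factS natrM mulf_eq0 negb_or => /andP[n0 f0].
have an0 : a ^+ n != 0 by apply: expf_neq0.
by rewrite exprS; field; rewrite an0 f0 a0 addrC natr1 n0.
Qed.

Lemma s_tildeD r m : (0 < r)%N ->
  hbar * (m + r)%N%:R * s_tilde r (m + r)%N = s_tilde r m.
Proof.
move=> r_gt0; rewrite /s_tilde dvdn_addl //.
case: (boolP (r %| m)%N) => [/dvdnP [n ->] | _]; last by rewrite mulr0.
have -> : (n * r + r = n.+1 * r)%N by rewrite mulSn addnC.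
rewrite !mulnK // -!mulrA -!exprMn natrM mulrCA mulrA -[_ * _ * hbar]mulrA.
apply: mulr_natS_inv_fact_exp.
- exact: mulf_neq0 (natrK_neq0 _ r_gt0) hbar_neq0.
- by rewrite natrK_neq0 ?fact_gt0.
Qed.

Lemma PsiD r m : (0 < r)%N ->
  (\prod_(i < r) (1 - hbar * (m + i)%N%:R)) * (hbar * (m + r)%N%:R * Psi r (m + r)%N)
  = Psi r m.
Proof.
move=> r_gt0; rewrite !PsiE hpochD -(s_tildeD r m r_gt0).
have := prod_subr_hbar_natr_neq0 (addn m) r.
set P := \prod_(i < r) _ => P0.
by rewrite mulrCA invfM !mulrA 2![_ * P * _]mulrAC (mulfK P0).
Qed.

Lemma prod_eigen_rev {r m k : nat} : k.+1 = (m + r)%N ->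
  \prod_(j < r) (1 + hbar * j%:R - hbar * k%:R)
  = \prod_(i < r) (1 - hbar * (m + i)%N%:R).
Proof.
move=> def_k; rewrite (reindex_inj rev_ord_inj) /=; apply: eq_bigr => i _.
have i_lt_r := ltn_ord i.
have -> : k = (m + i + (r - i.+1))%N by lia.
by rewrite !natrD; ring.
Qed.

Theorem proposition6p2 (r : nat) (hr : (1 <= r)%N) :
  forall k : nat,
    xop (addop (iter r.-1 xop (Psi r)) (prodop r (yop (Psi r)))) k = 0.
Proof.
case=> [//|k] /=; rewrite /addop iter_xopE prodopE /yop.
case: leqP => [r_le_k | k_lt_r].
- have def_k : k.+1 = ((k - r.-1) + r)%N by lia.
  rewrite (prod_eigen_rev def_k) mulrN def_k PsiD //.
  exact: subrr.
- rewrite PsiE s_tilde_small; last by apply/andP; split; lia.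
  by rewrite !mul0r mulr0 oppr0 mulr0 addr0.
Qed.
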